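(* Let $w$ be a 2D-weight and $\mathfrak{K}_w$ the 2D-GWN operator associated with $w$. Then for all $k\ge0$, as operators on $\mathcal{S}^*(M)$, $$\mathfrak{K}_w\mathfrak{a}_k^\dagger=\mathfrak{a}_k^\dagger\mathfrak{K}_w-\mathfrak{a}_k^\dagger\mathfrak{N}_{w(k,\cdot)}-\mathfrak{a}_k^\dagger\mathfrak{N}_{w(\cdot,k)}+\Big[\sum_{j=0}^\infty w(j,k)\Big]\mathfrak{a}_k^\dagger,$$ where $\mathfrak{N}_{w(k,\cdot)}$ and $\mathfrak{N}_{w(\cdot,k)}$ are the 1D-GWN operators associated with the bounded nonnegative functions $n\mapsto w(k,n)$ and $j\mapsto w(j,k)$ on $\mathbb{N}$.
   Context: Setting: $M$ a discrete-time normal martingale with the chaotic representation property; $Z_0=M_0$, $Z_n=M_n-M_{n-1}$; $\Gamma$ the finite subsets of $\mathbb{N}$, $Z_\emptyset=1$, $Z_\sigma=\prod_{j\in\sigma}Z_j$, an orthonormal basis of $\mathcal{L}^2(M)$. $\lambda_\emptyset=1$, $\lambda_\sigma=\prod_{k\in\sigma}(k+1)$; $\mathcal{S}(M)=\{\xi\in\mathcal{L}^2(M):\sum_\sigma\lambda_\sigma^{2p}|\langle Z_\sigma,\xi\rangle|^2<\infty\ \forall p\ge0\}$, $\mathcal{S}^*(M)$ its dual with the strong topology. Fock transform $\widehat\Phi(\sigma)=\Phi(Z_\sigma)$ (determines $\Phi$); $\mathbf{1}_\sigma$ is the indicator of $\sigma$. A 2D-weight is a nonnegative $w$ on $\mathbb{N}^2$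 with $\sup_k\sum_jw(j,k)<\infty$ (hence $w$ is bounded); spectral function $\vartheta_w(\sigma)=\sum_j\mathbf{1}_\sigma(j)w(j,j)+\sum_{j,k}(1-\mathbf{1}_\sigma(j))\mathbf{1}_\sigma(k)w(j,k)$. The 2D-GWN operator $\mathfrak{K}_w$ is the unique continuous linear operator on $\mathcal{S}^*(M)$ with $\widehat{\mathfrak{K}_w\Phi}(\sigma)=\vartheta_w(\sigma)\widehat\Phi(\sigma)$. For a bounded nonnegative $u$ on $\mathbb{N}$, the 1D-GWN operator $\mathfrak{N}_u$ is the unique continuous linear operator on $\mathcal{S}^*(M)$ with $\widehat{\mathfrak{N}_u\Phi}(\sigma)=\#_u(\sigma)\widehat\Phi(\sigma)$, $\#_u(\sigma)=\sum_k\mathbf{1}_\sigma(k)u(k)$. For $k\ge0$, $\mathfrak{a}_k,\mathfrak{a}_k^\dagger$ are the continuous linear operators on $\mathcal{S}^*(M)$ determined by $\widehat{\mathfrak{a}_k\Phi}(\sigma)=(1-\mathbf{1}_\sigma(k))\widehat\Phi(\sigma\cup\{k\})$ and $\widehat{\mathfrak{a}_k^\dagger\Phi}(\sigma)=\mathbf{1}_\sigma(k)\widehat\Phi(\sigma\setminus\{k\})$. *)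

From HB Require Import structures.
From mathcomp Require Import all_boot all_order all_algebra finmap.
From mathcomp Require Import all_classical all_reals all_analysis.
From mathcomp Require Import complex.
Set Implicit Arguments.
Unset Strict Implicit.
Unset Printing Implicit Defensive.
Import Order.TTheory GRing.Theory Num.Theory.
Local Open Scope ring_scope.
Local Open Scope fset_scope.

(* Gamma = finite subsets of N, modelled by {fset nat}.
   A generalized functional Phi in S*(M) is identified with its Fock transform
   hat Phi : Gamma -> C (the Fock transform determines Phi, and every operator
   in the statement is *defined* by its action on Fock transforms). *)

Definition indic (R : realType) (s : {fset nat}) (j : nat) : R := (j \in s)%:R.

Definition lambda (R : realType) (s : {fset nat}) : R := \prod_(k <- s) (k.+1)%:R.

Definition in_Sstar (R : realType) (Phi : {fset nat} -> R[i]) : Prop :=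
  exists p : nat,
    (\esum_(s in [set: {fset nat}])
        (((lambda R s) ^- (2 * p)) * ((complex.Re (Phi s)) ^+ 2 + (complex.Im (Phi s)) ^+ 2))%:E < +oo)%E.

Definition weight2D (R : realType) (w : nat -> nat -> R) : Prop :=
  (forall j k, 0 <= w j k) /\
  exists C : R, forall k n, \sum_(j < n) w j k <= C.

Definition colsum (R : realType) (w : nat -> nat -> R) (k : nat) : R :=
  limn (fun n => \sum_(0 <= j < n) w j k).

(* spectral function theta_w(sigma)
   = sum_j 1_s(j) w(j,j) + sum_{j,k} (1-1_s(j)) 1_s(k) w(j,k);
   the (nonnegative) double series is written as the finite sum over k in sigma
   of the series over j. *)
Definition theta (R : realType) (w : nat -> nat -> R) (s : {fset nat}) : R :=
  \sum_(j <- s) w j j +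
  \sum_(k <- s) limn (fun n => \sum_(0 <= j < n) ((1 - indic R s j) * w j k)).

Definition count_u (R : realType) (u : nat -> R) (s : {fset nat}) : R :=
  \sum_(k <- s) u k.

Definition rc (R : realType) (x : R) : R[i] := real_complex R x.

Definition K2 (R : realType) (w : nat -> nat -> R) (Phi : {fset nat} -> R[i])
  : {fset nat} -> R[i] := fun s => rc (theta w s) * Phi s.

Definition N1 (R : realType) (u : nat -> R) (Phi : {fset nat} -> R[i])
  : {fset nat} -> R[i] := fun s => rc (count_u u s) * Phi s.

Definition ann (R : realType) (k : nat) (Phi : {fset nat} -> R[i])
  : {fset nat} -> R[i] := fun s => rc (1 - indic R s k) * Phi (s `|` [fset k]).

Definition cre (R : realType) (k : nat) (Phi : {fset nat} -> R[i])
  : {fset nat} -> R[i] := fun s => rc (indic R s k) * Phi (s `\ k).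

From Pilot Require Import Defs.
From HB Require Import structures.
From mathcomp Require Import all_boot all_order all_algebra finmap.
From mathcomp Require Import all_classical all_reals all_analysis.
From mathcomp Require Import complex.
From mathcomp Require Import ring.
Import Order.TTheory GRing.Theory Num.Theory.
Import numFieldNormedType.Exports.

Local Open Scope ring_scope.

(* Each inner series of theta_w(sigma) is a column series sum_j w(j,k) with
   the finitely many terms j in sigma removed, so
     theta_w(sigma) = sum_{j in sigma} w(j,j)
                      + sum_{k in sigma} (colsum k - sum_{j in sigma} w(j,k)).
   In this closed form, adding a point k to tau changes theta by exactly
   colsum k - #_{w(k,.)}(tau) - #_{w(.,k)}(tau).  All operators involved act
   diagonally on Fock transforms, up to the shift sigma -> sigma \ k of the
   creation operator, so the commutation relation reduces to this identity. *)

Lemma limn_near_addr (R : realType) (u v : nat -> R) (c : R) :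
  cvgn u -> (\forall n \near \oo%classic, v n = u n + c) -> limn v = limn u + c.
Proof.
move=> cu uv; apply: cvg_lim => //.
apply: cvg_trans (cvgD cu (cvg_cst c)).
by apply: near_eq_cvg; near=> n; rewrite (near uv n).
Unshelve. all: by end_near. Qed.

Lemma big_nat_indicM (R : realType) (A : {fset nat}) (f : nat -> R) (n : nat) :
  {in A, forall j, j < n}%N ->
  \sum_(0 <= j < n) Defs.indic R A j * f j = \sum_(j <- A) f j.
Proof.
move=> An.
rewrite (eq_bigr (fun j => if j \in A then f j else 0)); last first.
  by move=> j _; rewrite /Defs.indic; case: (j \in A); rewrite ?mul1r ?mul0r.
rewrite -big_mkcond -big_filter; apply: perm_big.
apply: uniq_perm; [by rewrite filter_uniq // iota_uniq | exact: fset_uniq |].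
move=> j; rewrite mem_filter mem_iota subn0.
by apply/andP/idP => [[]//|jA]; split=> //; exact: An.
Qed.

Lemma limn_sum_compl (R : realType) (A : {fset nat}) (u : nat -> R) :
  cvgn (fun n => \sum_(0 <= j < n) u j) ->
  limn (fun n => \sum_(0 <= j < n) ((1 - Defs.indic R A j) * u j)) =
  limn (fun n => \sum_(0 <= j < n) u j) - \sum_(j <- A) u j.
Proof.
move=> cu; apply: limn_near_addr => //.
near=> n; rewrite -(@big_nat_indicM _ A u n) -?sumrB.
  by apply: eq_bigr => j _; rewrite mulrBl mul1r.
move=> j jA; apply: (@leq_ltn_trans (\max_(i <- A) i)).
  exact: (@leq_bigmax_seq _ _ xpredT id).
by near: n; exact: nbhs_infty_gt.
Unshelve. all: by end_near. Qed.

Lemma weight2D_colsum_cvg (R : realType) (w : nat -> nat -> R) (k : nat) :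
  weight2D w -> cvgn (fun n => \sum_(0 <= j < n) w j k).
Proof.
move=> [w_ge0 [C wC]]; apply: nondecreasing_is_cvgn.
  by apply: nondecreasing_series => j _ _; exact: w_ge0.
by exists C => _ [n _ <-]; rewrite big_mkord; exact: wC.
Qed.

Lemma theta_colsumE (R : realType) (w : nat -> nat -> R) (A : {fset nat}) :
  weight2D w ->
  theta w A = \sum_(j <- A) w j j + \sum_(k <- A) (colsum w k - \sum_(j <- A) w j k).
Proof.
move=> hw; congr (_ + _); apply: eq_bigr => k _.
exact/limn_sum_compl/weight2D_colsum_cvg.
Qed.

Lemma theta_fsetU1 (R : realType) (w : nat -> nat -> R) (k : nat) (t : {fset nat}) :
  weight2D w -> k \notin t ->
  theta w (k |` t)%fset = theta w t - count_u (fun n => w k n) t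
                     - count_u (fun j => w j k) t + colsum w k.
Proof.
move=> hw kt; rewrite !theta_colsumE // /count_u !big_fsetU1 //=.
have -> : \sum_(m <- t) (colsum w m - \sum_(j <- (k |` t)%fset) w j m) =
          \sum_(m <- t) (colsum w m - \sum_(j <- t) w j m) - \sum_(m <- t) w k m.
  by rewrite -sumrB; apply: eq_bigr => m _; rewrite big_fsetU1 //=; ring.
ring.
Qed.

Theorem theorem3p16 (R : realType) (w : nat -> nat -> R) :
  weight2D w ->
  forall k : nat, forall Phi : {fset nat} -> R[i], in_Sstar Phi ->
  forall s : {fset nat},
    K2 w (cre k Phi) s =
      cre k (K2 w Phi) s
      - cre k (N1 (fun n => w k n) Phi) s
      - cre k (N1 (fun j => w j k) Phi) s
      + rc (colsum w k) * cre k Phi s.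
Proof.
move=> hw k Phi _ s; rewrite /K2 /N1 /cre /Defs.indic.
have [ks|ks] /= := boolP (k \in s); last first.
  by rewrite /rc !rmorph0 !mul0r !mulr0 subrr subr0 addr0.
have kt : k \notin (s `\ k)%fset by rewrite fsetD11.
rewrite -{1}(fsetD1K ks) theta_fsetU1 //.
(* Abstracting the real quantities keeps [rmorphD] and [ring] from unfolding [theta]. *)
move: (theta _ _) (count_u _ _) (count_u _ _) (colsum _ _) (Phi _) => T B C D P.
rewrite /rc !rmorph1 !mul1r !rmorphD !rmorphN.
ring.
Qed.
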